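(* Let $N\geq 2$, $k\geq 1$ be integers, $s\in\left(-\frac{1}{N-1},1\right)$, and let $\Gamma(N,k)$ be the $N^k\times N^k$ matrix with rows and columns indexed by functions $\sigma,\tau:\{1,\dots,k\}\to\{1,\dots,N\}$ and entries $\Gamma(N,k)_{\sigma\tau}=s^{|\{t:\sigma(t)\neq\tau(t)\}|}$ (this is the Gram matrix of the states $|\psi_{\sigma(1)}\rangle\otimes\cdots\otimes|\psi_{\sigma(k)}\rangle$ where $|\psi_1\rangle,\dots,|\psi_N\rangle$ are unit vectors with pairwise inner products $s$). Let $I$ be the $N^k\times N^k$ identity matrix and $$P(N,k)=\begin{cases}(1-s)^k I, & s\in[0,1),\\ \left[1+(N-1)s\right]^k I, & s\in\left(-\frac{1}{N-1},0\right].\end{cases}$$ Then $\Gamma(N,k)-P(N,k)$ is positive semidefinite. *)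

From mathcomp Require Import all_boot all_order all_algebra.
Set Implicit Arguments. Unset Strict Implicit. Unset Printing Implicit Defensive.
Import Order.TTheory GRing.Theory Num.Theory.
Local Open Scope ring_scope.

Definition idx (N k : nat) := {ffun 'I_k -> 'I_N}.

Definition psd (R : realFieldType) (T : finType) (A : T -> T -> R) : Prop :=
  (forall i j, A i j = A j i) /\
  (forall x : T -> R, 0 <= \sum_(i : T) \sum_(j : T) x i * A i j * x j).

Definition Gamma (R : realFieldType) (N k : nat) (s : R) (sg ta : idx N k) : R :=
  s ^+ #|[pred t | sg t != ta t]|.

(* P(N,k) = (1-s)^k I if s in [0,1), [1+(N-1)s]^k I if s in (-1/(N-1), 0]
   (the two values agree at s = 0). *)
Definition Pcoef (R : realFieldType) (N k : nat) (s : R) : R :=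
  if 0 <= s then (1 - s) ^+ k else (1 + (N%:R - 1) * s) ^+ k.

Definition Pmat (R : realFieldType) (N k : nat) (s : R) (sg ta : idx N k) : R :=
  Pcoef N k s * (sg == ta)%:R.

Arguments Gamma {R} N k s sg ta.
Arguments Pcoef {R} N k s.
Arguments Pmat {R} N k s sg ta.

From mathcomp Require Import all_boot all_order all_algebra.
From mathcomp Require Import ring lra.
Import Order.TTheory GRing.Theory Num.Theory.
Set Implicit Arguments. Unset Strict Implicit. Unset Printing Implicit Defensive.
Local Open Scope ring_scope.

(* Gamma(N,k) is the k-th Kronecker power of Gamma(N,1) = (1-s) I + s J, whose
   least eigenvalue is c = min(1-s, 1+(N-1)s); c^k bounds the least eigenvalue
   of the power.  Splitting x along the first coordinate into
   slices y_1, ..., y_N gives x^T Gamma(N,k+1) x = sum_(i,j) gamma_ij Q(y_i, y_j)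
   with Q the form of Gamma(N,k).  For any positive semidefinite Q,
   0 <= sum_(i,j) Q(y_i, y_j) <= N sum_i Q(y_i, y_i) (expand the nonnegative
   sum of the Q(y_i - y_j, y_i - y_j)), so the right-hand side is at least
   c sum_i Q(y_i, y_i), and induction on k concludes. *)

Section BilinearForm.
Variables (R : comPzRingType) (T : finType).
Implicit Types (A B : T -> T -> R) (u v w : T -> R).

Definition bform A u v := \sum_i \sum_j u i * A i j * v j.

Lemma bform_suml A (I : finType) (y : I -> T -> R) v :
  bform A (fun t => \sum_i y i t) v = \sum_i bform A (y i) v.
Proof.
rewrite /bform [RHS]exchange_big; apply: eq_bigr => t _.
rewrite [RHS]exchange_big; apply: eq_bigr => t' _.
by rewrite !mulr_suml.
Qed.

Lemma bform_sumr A (I : finType) (y : I -> T -> R) u :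
  bform A u (fun t => \sum_i y i t) = \sum_i bform A u (y i).
Proof.
rewrite /bform [RHS]exchange_big; apply: eq_bigr => t _.
rewrite [RHS]exchange_big; apply: eq_bigr => t' _.
by rewrite mulr_sumr.
Qed.

Lemma bformBl A u v w : bform A (fun t => u t - v t) w = bform A u w - bform A v w.
Proof.
rewrite /bform -sumrB; apply: eq_bigr => t _; rewrite -sumrB.
by apply: eq_bigr => t' _; rewrite !mulrBl.
Qed.

Lemma bformBr A u v w : bform A w (fun t => u t - v t) = bform A w u - bform A w v.
Proof.
rewrite /bform -sumrB; apply: eq_bigr => t _; rewrite -sumrB.
by apply: eq_bigr => t' _; rewrite mulrBr.
Qed.

Lemma bform_kernelB A B u v :
  bform (fun i j => A i j - B i j) u v = bform A u v - bform B u v.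
Proof.
rewrite /bform -sumrB; apply: eq_bigr => t _; rewrite -sumrB.
by apply: eq_bigr => t' _; rewrite mulrBr mulrBl.
Qed.

Lemma bform_scalar (c : R) u v :
  bform (fun i j => c * (i == j)%:R) u v = c * \sum_i u i * v i.
Proof.
rewrite /bform mulr_sumr; apply: eq_bigr => t _.
rewrite (bigD1 t) //= big1 => [|t' /negbTE]; last by rewrite eq_sym => ->; rewrite !mulr0 mul0r.
by rewrite eqxx addr0 mulr1 mulrCA mulrA.
Qed.

End BilinearForm.

Lemma sumr_offdiag_scale (R : comPzRingType) (I : finType) (s : R) (b : I -> I -> R) :
  \sum_i \sum_j (if i == j then 1 else s) * b i j =
  (1 - s) * \sum_i b i i + s * \sum_i \sum_j b i j.
Proof.
rewrite !mulr_sumr -big_split; apply: eq_bigr => i _ /=.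
rewrite (bigD1 i) //= eqxx (bigD1 i (P := predT)) //= mulrDr.
under eq_bigr => j /negbTE hj do rewrite eq_sym hj.
by rewrite -mulr_sumr; ring.
Qed.

Section PsdForm.
Variables (R : realFieldType) (T : finType) (A : T -> T -> R).
Hypothesis bform_ge0 : forall x, 0 <= bform A x x.

Lemma sum_bform_ge0 (I : finType) (y : I -> T -> R) :
  0 <= \sum_i \sum_j bform A (y i) (y j).
Proof.
have := bform_ge0 (fun t => \sum_i y i t).
by rewrite bform_suml; under eq_bigr do rewrite bform_sumr.
Qed.

Lemma sum_bform_le (I : finType) (y : I -> T -> R) :
  \sum_i \sum_j bform A (y i) (y j) <= #|I|%:R * \sum_i bform A (y i) (y i).
Proof.
set Q := fun i j => bform A (y i) (y j).
have expand : \sum_i \sum_j bform A (fun t => y i t - y j t) (fun t => y i t - y j t)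
    = (#|I|%:R * \sum_i Q i i - \sum_i \sum_j Q i j) *+ 2.
  have diagl : \sum_i \sum_(j : I) Q i i = #|I|%:R * \sum_i Q i i.
    by rewrite mulr_sumr; apply: eq_bigr => i _; rewrite sumr_const mulr_natl.
  have diagr : \sum_(i : I) \sum_j Q j j = #|I|%:R * \sum_i Q i i.
    by rewrite exchange_big.
  have swap : \sum_i \sum_j Q j i = \sum_i \sum_j Q i j by rewrite exchange_big.
  under eq_bigr => i _ do under eq_bigr => j _ do rewrite bformBl !bformBr.
  under eq_bigr do rewrite !sumrB.
  by rewrite !sumrB diagl diagr swap; ring.
have : 0 <= \sum_i \sum_j bform A (fun t => y i t - y j t) (fun t => y i t - y j t).
  by apply: sumr_ge0 => i _; apply: sumr_ge0 => j _.
by rewrite expand pmulrn_lge0 // subr_ge0.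
Qed.

Lemma sum_gram1_bform_ge N (s : R) (y : 'I_N -> T -> R) :
  s < 1 -> 0 < 1 + (N%:R - 1) * s ->
  Pcoef N 1 s * \sum_i bform A (y i) (y i) <=
  \sum_i \sum_j (if i == j then 1 else s) * bform A (y i) (y j).
Proof.
move=> hs1 hsN; rewrite sumr_offdiag_scale.
have S_ge0 := sum_bform_ge0 y.
have := sum_bform_le y; rewrite card_ord => S_le.
have D_ge0 : 0 <= \sum_i bform A (y i) (y i) by apply: sumr_ge0.
rewrite /Pcoef expr1; case: ifP => s_ge0; first nra.
have s_lt0 : s < 0 by rewrite ltNge s_ge0.
nra.
Qed.

End PsdForm.

Section GammaKronecker.
Variables (R : realFieldType) (N : nat) (s : R).

Definition idx_cons k (i : 'I_N) (f : idx N k) : idx N k.+1 :=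
  [ffun t => if unlift ord0 t is Some t' then f t' else i].

Lemma idx_cons0 k i (f : idx N k) : idx_cons i f ord0 = i.
Proof. by rewrite ffunE unlift_none. Qed.

Lemma idx_cons_lift k i (f : idx N k) t : idx_cons i f (lift ord0 t) = f t.
Proof. by rewrite ffunE liftK. Qed.

Lemma big_idx_cons (V : nmodType) k (F : idx N k.+1 -> V) :
  \sum_g F g = \sum_i \sum_(f : idx N k) F (idx_cons i f).
Proof.
rewrite pair_big /= (reindex (fun p : 'I_N * idx N k => idx_cons p.1 p.2)) //=.
exists (fun g => (g ord0, [ffun t => g (lift ord0 t)])) => [[i f] _ | g _] /=.
  by rewrite idx_cons0; congr pair; apply/ffunP => t; rewrite ffunE idx_cons_lift.
by apply/ffunP => t; rewrite ffunE; case: unliftP => [t'|] ->; rewrite ?ffunE.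
Qed.

Lemma Gamma_prod k (f g : idx N k) :
  Gamma N k s f g = \prod_t (if f t == g t then 1 else s).
Proof.
rewrite /Gamma -prodr_const big_mkcond; apply: eq_bigr => t _.
by rewrite inE; case: eqP.
Qed.

Lemma GammaC k (f g : idx N k) : Gamma N k s f g = Gamma N k s g f.
Proof. by rewrite !Gamma_prod; apply: eq_bigr => t _; rewrite eq_sym. Qed.

Lemma Gamma_cons k i j (f g : idx N k) :
  Gamma N k.+1 s (idx_cons i f) (idx_cons j g) =
  (if i == j then 1 else s) * Gamma N k s f g.
Proof.
rewrite !Gamma_prod big_ord_recl !idx_cons0.
by congr (_ * _); apply: eq_bigr => t _; rewrite !idx_cons_lift.
Qed.

Lemma bform_Gamma0 (x : idx N 0 -> R) :
  bform (Gamma N 0 s) x x = \sum_f x f ^+ 2.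
Proof.
have idx0_eq (f g : idx N 0) : f = g by apply/ffunP => -[].
rewrite /bform; apply: eq_bigr => f _.
rewrite (bigD1 f) //= big1 => [|g]; last by rewrite (idx0_eq g f) eqxx.
by rewrite Gamma_prod big_ord0 mulr1 addr0 expr2.
Qed.

Lemma bform_Gamma_cons k (u v : idx N k.+1 -> R) :
  bform (Gamma N k.+1 s) u v =
  \sum_i \sum_j (if i == j then 1 else s) *
    bform (Gamma N k s) (fun f => u (idx_cons i f)) (fun g => v (idx_cons j g)).
Proof.
rewrite /bform big_idx_cons; apply: eq_bigr => i _.
under eq_bigr do rewrite big_idx_cons.
rewrite exchange_big; apply: eq_bigr => j _.
rewrite mulr_sumr; apply: eq_bigr => f _.
rewrite mulr_sumr; apply: eq_bigr => g _.
by rewrite Gamma_cons mulrCA -!mulrA.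
Qed.

Lemma PcoefS k : Pcoef N k.+1 s = Pcoef N 1 s * Pcoef N k s.
Proof. by rewrite /Pcoef; case: ifP => _; rewrite exprS expr1. Qed.

Hypotheses (s_lt1 : s < 1) (gram1_pos : 0 < 1 + (N%:R - 1) * s).

Lemma Pcoef_ge0 k : 0 <= Pcoef N k s.
Proof. by rewrite /Pcoef; case: ifP => _; apply/exprn_ge0/ltW; rewrite ?subr_gt0. Qed.

Lemma Pcoef_sumsq_le_bform_Gamma k (x : idx N k -> R) :
  Pcoef N k s * \sum_f x f ^+ 2 <= bform (Gamma N k s) x x.
Proof.
elim: k x => [|k IH] x; first by rewrite bform_Gamma0 /Pcoef !expr0 if_same mul1r.
have Gamma_ge0 u : 0 <= bform (Gamma N k s) u u.
  apply: le_trans (IH u); apply: mulr_ge0; first exact: Pcoef_ge0.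
  by apply: sumr_ge0 => f _; apply: sqr_ge0.
rewrite bform_Gamma_cons big_idx_cons PcoefS -mulrA.
apply: le_trans (sum_gram1_bform_ge Gamma_ge0 _ s_lt1 gram1_pos).
rewrite ler_wpM2l ?Pcoef_ge0 // mulr_sumr.
by apply: ler_sum => i _; apply: IH.
Qed.

End GammaKronecker.

Theorem theorem3 (R : realFieldType) (N k : nat) (s : R) :
  (2 <= N)%N -> (1 <= k)%N ->
  - 1 / (N%:R - 1) < s -> s < 1 ->
  psd (fun sg ta : idx N k => Gamma N k s sg ta - Pmat N k s sg ta).
Proof.
move=> N_ge2 _ s_gt s_lt1.
have N1_gt0 : 0 < N%:R - 1 :> R.
  have : 2%:R <= N%:R :> R by rewrite ler_nat.
  lra.
have gram1_pos : 0 < 1 + (N%:R - 1) * s.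
  by move: s_gt; rewrite ltr_pdivrMr //; lra.
split=> [sg ta | x]; first by rewrite GammaC /Pmat eq_sym.
change (0 <= bform (fun sg ta => Gamma N k s sg ta - Pmat N k s sg ta) x x).
rewrite bform_kernelB bform_scalar subr_ge0.
under eq_bigr do rewrite -expr2.
exact: Pcoef_sumsq_le_bform_Gamma.
Qed.
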